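(* For every $n\ge1$ and $k\ge1$ there is a deterministic protocol in the Robertson–Webb query model that runs in $k$ rounds and, for every instance with $n$ players, computes a proportional allocation in which every player receives a single interval, using a total of $O(k\,n^{1+1/k})$ queries.
   Context: Cake cutting: the cake is $[0,1]$; there are $n$ players, each with a private valuation $V_i(I)=\int_I v_i(x)\,dx$ given by a non-negative integrable density $v_i$, normalized so $V_i([0,1])=1$. An allocation is a partition of $[0,1]$ into pieces $A_1,\ldots,A_n$, player $i$ receiving $A_i$; it is proportional if $V_i(A_i)\ge1/n$ for all $i$. Robertson–Webb queries: $\mathrm{Cut}_i(\alpha)$ returns a point $y$ with $V_i([0,y])=\alpha$ (leftmost such point), which becomes a cut point; $\mathrm{Eval}_i(y)$ returns $V_i([0,y])$ for a previously obtained cut point $y$. The output allocation must be demarcated by cut points obtained through queries. A protocol runs in $k$ rounds if in each round it issues a set of queries (to any players) chosen depending only on answers from earlier rounds, then receives all answers. *)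

From HB Require Import structures.
From mathcomp Require Import all_boot all_order all_algebra.
From mathcomp Require Import all_classical all_reals all_analysis.
Set Implicit Arguments. Unset Strict Implicit. Unset Printing Implicit Defensive.
Import Order.TTheory GRing.Theory Num.Theory.
Local Open Scope classical_set_scope.
Local Open Scope ring_scope.

Section CakeCutting.
Variable R : realType.

Notation mu := (@lebesgue_measure R).

Definition I01 : set R := `[0%R, 1%R].

(* v is a density of a valuation on the cake [0,1]: nonnegative, integrable, total mass 1 *)
Definition is_density (v : R -> R) : Prop :=
  measurable_fun I01 v /\
  (forall x, 0 <= x <= 1 -> 0 <= v x) /\
  mu.-integrable I01 (EFin \o v) /\
  Rintegral mu I01 v = 1.

Definition Vint (v : R -> R) (a b : R) : R := Rintegral mu (`[a, b] : set R) v.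

Definition Vcum (v : R -> R) (y : R) : R := Vint v 0 y.

Definition cut_answer (v : R -> R) (alpha : R) : R :=
  inf [set y | 0 <= y <= 1 /\ Vcum v y = alpha].

(* QCut i alpha = Cut_i(alpha);  QEval i j = Eval_i(y) where y is the j-th cut point
   (0-based) obtained in earlier rounds. *)
Inductive query (n : nat) :=
| QCut of 'I_n & R
| QEval of 'I_n & nat.

Definition transcript (n : nat) := seq (query n * R).

Definition cut_points n (h : transcript n) : seq R :=
  pmap (fun qa : query n * R => match qa.1 with QCut _ _ => Some qa.2 | QEval _ _ => None end) h.

Definition answer n (v : 'I_n -> R -> R) (h : transcript n) (q : query n) : R :=
  match q with
  | QCut i alpha => cut_answer (v i) alpha
  | QEval i j => Vcum (v i) (nth 0 (cut_points h) j)
  end.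

(* A deterministic protocol: a list of rounds, each choosing a batch of queries
   from the transcript of the previous rounds, and an output map giving each player
   the endpoints of its interval as indices into the list (0 :: 1 :: cut points). *)
Record protocol (n : nat) := Protocol {
  rounds : seq (transcript n -> seq (query n));
  output : transcript n -> 'I_n -> nat * nat
}.

Fixpoint run_rounds n (v : 'I_n -> R -> R)
    (rs : seq (transcript n -> seq (query n))) (h : transcript n) : transcript n :=
  match rs with
  | [::] => h
  | r :: rs' => run_rounds v rs' (h ++ [seq (q, answer v h q) | q <- r h])
  end.

Definition run n (P : protocol n) (v : 'I_n -> R -> R) : transcript n :=
  run_rounds v (rounds P) [::].

Definition num_queries n (P : protocol n) (v : 'I_n -> R -> R) : nat :=
  size (run P v).

Definition points n (h : transcript n) : seq R := 0 :: 1 :: cut_points h.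

Definition left_end n (P : protocol n) v (i : 'I_n) : R :=
  nth 0 (points (run P v)) (output P (run P v) i).1.
Definition right_end n (P : protocol n) v (i : 'I_n) : R :=
  nth 0 (points (run P v)) (output P (run P v) i).2.

Definition interval_partition n (a b : 'I_n -> R) : Prop :=
  (forall i, 0 <= a i /\ a i <= b i /\ b i <= 1) /\
  (forall i j, i != j -> b i <= a j \/ b j <= a i) /\
  \sum_(i < n) (b i - a i) = 1.

Definition valid_indices n (P : protocol n) v : Prop :=
  forall i, ((output P (run P v) i).1 < size (points (run P v)))%N /\
            ((output P (run P v) i).2 < size (points (run P v)))%N.

Definition proportional_interval_output n (P : protocol n) (v : 'I_n -> R -> R) : Prop :=
  valid_indices P v /\
  interval_partition (left_end P v) (right_end P v) /\
  forall i, Vint (v i) (left_end P v i) (right_end P v i) >= n%:R^-1.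

End CakeCutting.

(* Let m be the least integer with n <= m^k.  Before round r the players are
   grouped into blocks of at most m^(k-r) players; a block with players P and
   offset b owns an interval [lo, hi] in which, for every i in P, the points
   where V_i([0, .]) reaches b/n and (b + |P|)/n both lie.  In round r each
   player of such a block asks for its points at (b + t g)/n, t = 1 .. m-1,
   where g = m^(k-r-1); the block is then carved from left to right: the g
   players whose point at (b + g)/n comes first get [lo, x'], where x' is the
   largest of their points, and the others keep [x', hi] with offset b + g.
   This preserves the invariant, so after k rounds every block is a single
   player owning an interval worth at least 1/n to it.  Each round costs
   n (m - 1) Cut queries, and (m - 1)^k < n by minimality of m. *)

Set Warnings "-notation-overridden,-ambiguous-paths,-notation-incompatible-prefix".
Set Warnings "-redundant-canonical-projection".
From HB Require Import structures.
From mathcomp Require Import all_boot all_order all_algebra.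
From mathcomp Require Import all_classical all_reals all_analysis.
Set Implicit Arguments. Unset Strict Implicit. Unset Printing Implicit Defensive.
Import Order.TTheory GRing.Theory Num.Theory numFieldNormedType.Exports.
Local Open Scope classical_set_scope.
Local Open Scope ring_scope.

Lemma level_set_inf_mem (R : realType) (A : set R) (f : R -> R) (y : R) :
  closed A -> {within A, continuous f} ->
  A `&` f @^-1` [set y] !=set0 -> has_lbound (A `&` f @^-1` [set y]) ->
  (A `&` f @^-1` [set y]) (inf (A `&` f @^-1` [set y])).
Proof.
move=> clA fA S0 Slb; apply: itv_closed_infimums => //.
  rewrite setIC closed_setIS //; apply: (continuous_closedP _).1 fA _ _.
  by rewrite -set_itv1; exact: itv_closed.
by split; [exact: ge_inf | move=> x; exact: lb_le_inf].
Qed.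

Section CumulativeValuation.
Variables (R : realType) (v : R -> R).
Hypothesis v_density : is_density v.
Local Notation mu := (@lebesgue_measure R).

Lemma density_integrable_itv (a b : itv_bound R) :
  (BLeft 0 <= a)%O -> (b <= BRight 1)%O ->
  mu.-integrable [set` Interval a b] (EFin \o v).
Proof.
move=> a0 b1; have [_ [_ [vI _]]] := v_density.
by apply: integrableS vI => //; [exact: measurable_itv | exact: subset_itvScc].
Qed.

Lemma Vint_cumE a b : 0 <= a -> a <= b -> b <= 1 -> Vint v a b = Vcum v b - Vcum v a.
Proof.
move=> a0 ab b1; rewrite /Vcum /Vint Rintegral_itvB ?bnd_simp //.
  by rewrite Rintegral_itv_obnd_cbnd // density_integrable_itv ?bnd_simp.
by rewrite density_integrable_itv ?bnd_simp.
Qed.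

Lemma Vint_ge0 a b : 0 <= a -> b <= 1 -> 0 <= Vint v a b.
Proof.
move=> a0 b1; have [_ [v_ge0 _]] := v_density.
apply: Rintegral_ge0 => x /=; rewrite in_itv /= => /andP[ax xb].
by apply: v_ge0; rewrite (le_trans a0 ax) (le_trans xb b1).
Qed.

Lemma Vcum_le a b : 0 <= a -> a <= b -> b <= 1 -> Vcum v a <= Vcum v b.
Proof. by move=> a0 ab b1; rewrite -subr_ge0 -Vint_cumE //; exact: Vint_ge0. Qed.

Lemma Vcum0 : Vcum v 0 = 0.
Proof. by rewrite /Vcum /Vint set_itv1 Rintegral_set1. Qed.

Lemma Vcum1 : Vcum v 1 = 1.
Proof. by have [_ [_ [_ v1]]] := v_density. Qed.

Lemma Vcum_continuous : {within `[0, 1], continuous (Vcum v)}.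
Proof.
have [_ [_ [vI _]]] := v_density.
exact: (@parameterized_integral_continuous R 0 1 v ler01 vI).
Qed.

Lemma cut_answerP a : 0 <= a <= 1 ->
  [/\ 0 <= cut_answer v a, cut_answer v a <= 1 & Vcum v (cut_answer v a) = a].
Proof.
move=> /andP[a0 a1]; rewrite /cut_answer.
have -> : [set y | 0 <= y <= 1 /\ Vcum v y = a] = `[0, 1] `&` Vcum v @^-1` [set a].
  by apply/seteqP; split => y /=; rewrite in_itv.
have [c c01 vc] : exists2 c, c \in `[0, 1] & Vcum v c = a.
  apply: IVT ler01 Vcum_continuous _.
  by rewrite Vcum0 Vcum1 ge_min le_max a0 a1 orbT.
set S := _ `&` _.
have S0 : S !=set0 by exists c.
have Slb : has_lbound S by exists 0 => y [/=]; rewrite in_itv /= => /andP[].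
have [] := level_set_inf_mem (@itv_closed _ R 0 1) Vcum_continuous S0 Slb.
by rewrite /= in_itv /= => /andP[-> ->].
Qed.

End CumulativeValuation.

Record block (R : realType) (n : nat) :=
  Block { members : seq 'I_n; offset : nat; lo : R; hi : R }.
Arguments members {R n}.

Definition block_tuple (R : realType) n (B : block R n) :=
  (members B, offset B, lo B, hi B).
Definition tuple_block (R : realType) n (t : seq 'I_n * nat * R * R) : block R n :=
  Block t.1.1.1 t.1.1.2 t.1.2 t.2.
Lemma block_tupleK (R : realType) n : cancel (@block_tuple R n) (@tuple_block R n).
Proof. by case. Qed.
HB.instance Definition _ (R : realType) n :=
  Equality.copy (block R n) (can_type (@block_tupleK R n)).

Section Blocks.
Variables (R : realType) (n : nat).
Implicit Types (M : 'I_n -> nat -> R) (P : seq 'I_n).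
Local Notation block := (block R n).

Definition null_block : block := Block [::] 0 0 0.

Definition mark_le : rel ('I_n * R) := fun p q => p.2 <= q.2.

Definition sort_by_mark M j P : seq ('I_n * R) :=
  sort mark_le [seq (i, M i j) | i <- P].

Lemma perm_sort_by_mark M j P : perm_eq (unzip1 (sort_by_mark M j P)) P.
Proof.
have {2}<- : unzip1 [seq (i, M i j) | i <- P] = P by elim: P => //= i P ->.
by apply: perm_map; rewrite perm_sort.
Qed.

Lemma mem_sort_by_mark M j P p :
  p \in sort_by_mark M j P -> p.1 \in P /\ p.2 = M p.1 j.
Proof. by rewrite mem_sort => /mapP[i iP ->]. Qed.

Lemma sort_by_mark_ext M M' j P :
  {in P, forall i, M i j = M' i j} -> sort_by_mark M j P = sort_by_mark M' j P.
Proof. by move=> MM'; congr sort; apply/eq_in_map => i /MM' ->. Qed.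

Definition split_point M g B : R :=
  \big[Num.max/lo B]_(p <- take g (sort_by_mark M (offset B + g) (members B))) p.2.

Definition head_block M g B : block :=
  Block (unzip1 (take g (sort_by_mark M (offset B + g) (members B))))
        (offset B) (lo B) (split_point M g B).

Definition tail_block M g B : block :=
  Block (unzip1 (drop g (sort_by_mark M (offset B + g) (members B))))
        (offset B + g) (split_point M g B) (hi B).

Fixpoint carve M (g f : nat) B : seq block :=
  if f is f'.+1 then
    if (size (members B) <= g)%N then [:: B]
    else head_block M g B :: carve M g f' (tail_block M g B)
  else [:: B].

Definition carve_all M g f (st : seq block) : seq block :=
  flatten [seq carve M g f B | B <- st].

Definition carve_queries g f (st : seq block) : seq ('I_n * nat) :=
  flatten [seq [seq (i, (offset B + g * t)%N) | i <- members B, t <- iota 1 f]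
          | B <- st].

Lemma size_carve_queries g f st :
  size (carve_queries g f st) = (size (flatten (map members st)) * f)%N.
Proof.
elim: st => //= B st IH.
rewrite /carve_queries /= size_cat size_allpairs size_iota -/(carve_queries g f st).
by rewrite IH size_cat mulnDl.
Qed.

Lemma carve_ext M M' g f B :
  (forall i t, i \in members B -> (0 < t <= f)%N ->
     M i (offset B + g * t)%N = M' i (offset B + g * t)%N) ->
  carve M g f B = carve M' g f B.
Proof.
elim: f B => [//|f IH] B MM' /=.
have sortE : sort_by_mark M (offset B + g) (members B) =
             sort_by_mark M' (offset B + g) (members B).
  by apply: sort_by_mark_ext => i iB; rewrite -[g]muln1 MM'.
rewrite /head_block /tail_block /split_point sortE; case: ifP => // _; congr cons.
apply: IH => i t /mapP[p pD ->] /andP[t0 tf] /=.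
have [pB _] := mem_sort_by_mark (mem_drop pD).
by rewrite -addnA -mulnS MM'.
Qed.

Lemma carve_all_ext M M' g f st :
  {in carve_queries g f st, forall q, M q.1 q.2 = M' q.1 q.2} ->
  carve_all M g f st = carve_all M' g f st.
Proof.
move=> MM'; rewrite /carve_all; congr flatten; apply/eq_in_map => B BS.
apply: carve_ext => i t iB tf.
apply: (MM' (i, _)); apply/flattenP.
exists [seq (j, (offset B + g * s)%N) | j <- members B, s <- iota 1 f].
  by apply/mapP; exists B.
by apply/allpairsP; exists (i, t); rewrite /= iB mem_iota add1n ltnS.
Qed.

Fixpoint tiles (st : seq block) (x y : R) : bool :=
  if st is B :: st' then (lo B == x) && tiles st' (hi B) y else x == y.

Lemma tiles_cat s1 s2 x y z : tiles s1 x y -> tiles s2 y z -> tiles (s1 ++ s2) x z.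
Proof.
elim: s1 x => [|B s1 IH] x /=; first by move/eqP ->.
by move=> /andP[-> t1] t2; rewrite IH.
Qed.

Lemma carve_tiles M g f B : tiles (carve M g f B) (lo B) (hi B).
Proof.
elim: f B => [|f IH] B /=; first by rewrite !eqxx.
by case: ifP => _ /=; rewrite !eqxx // IH.
Qed.

Lemma carve_all_tiles M g f st x y : tiles st x y -> tiles (carve_all M g f st) x y.
Proof.
elim: st x => [|B st IH] x //= /andP[/eqP <- t].
exact: tiles_cat (carve_tiles M g f B) (IH _ t).
Qed.

Lemma carve_members M g f B : perm_eq (flatten (map members (carve M g f B))) (members B).
Proof.
elim: f B => [|f IH] B /=; first by rewrite cats0.
case: ifP => _ /=; first by rewrite cats0.
have := perm_sort_by_mark M (offset B + g) (members B).
rewrite -[X in unzip1 X](cat_take_drop g) /unzip1 map_cat; apply: perm_trans.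
by rewrite perm_cat2l; exact: IH.
Qed.

Lemma carve_all_members M g f st :
  perm_eq (flatten (map members (carve_all M g f st))) (flatten (map members st)).
Proof.
elim: st => //= B st IH; rewrite /carve_all /= map_cat flatten_cat.
exact: perm_cat (carve_members M g f B) IH.
Qed.

Lemma carve_endpoints (Q : pred R) M g f B : (forall i j, Q (M i j)) ->
  Q (lo B) -> Q (hi B) -> all (fun C => Q (lo C) && Q (hi C)) (carve M g f B).
Proof.
move=> QM; elim: f B => [|f IH] B Qlo Qhi /=; first by rewrite Qlo Qhi.
have Qsplit : Q (split_point M g B).
  rewrite /split_point big_seq; apply: (big_ind Q) => // [a b Qa Qb | p /mem_take pS].
    by rewrite /Num.max; case: ifP.
  by rewrite (mem_sort_by_mark pS).2.
by case: ifP => _ /=; rewrite Qlo ?Qhi //= Qsplit IH.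
Qed.

Lemma carve_all_endpoints (Q : pred R) M g f st : (forall i j, Q (M i j)) ->
  all (fun B => Q (lo B) && Q (hi B)) st ->
  all (fun B => Q (lo B) && Q (hi B)) (carve_all M g f st).
Proof.
move=> QM; elim: st => //= B st IH /andP[/andP[Qlo Qhi] Qst].
by rewrite /carve_all /= all_cat carve_endpoints // IH.
Qed.

Section Fairness.
Variable M : 'I_n -> nat -> R.
Hypothesis M_mono : forall i j j', (j <= j')%N -> (j' <= n)%N -> M i j <= M i j'.

(* With M i j the point where V_i([0, .]) reaches j/n, a fair block is worth
   at least |members B|/n to each of its members. *)
Definition fair_block (cap : nat) B : bool :=
  [&& (0 < size (members B))%N, (size (members B) <= cap)%N,
      (offset B + size (members B) <= n)%N &
      all (fun i => (lo B <= M i (offset B)) &&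
                    (M i (offset B + size (members B)) <= hi B)) (members B)].

Lemma fair_block_le cap B : fair_block cap B -> lo B <= hi B.
Proof.
case: B => [[|i P] b x y] //= /and4P[_ _ bn /andP[/andP[xi iy] _]].
by apply: le_trans xi (le_trans _ iy); apply: M_mono => //; exact: leq_addr.
Qed.

Section Step.
Variables (g : nat) (B : block).
Hypotheses (g_gt0 : (0 < g)%N) (g_lt : (g < size (members B))%N).

Let s := sort_by_mark M (offset B + g) (members B).

Let size_s : size s = size (members B).
Proof. by rewrite size_sort size_map. Qed.

Let s_split : allrel mark_le (take g s) (drop g s).
Proof.
have tr : transitive mark_le by move=> a b c; exact: le_trans.
have : sorted mark_le s by apply: sort_sorted => p q; exact: le_total.
by rewrite -[X in sorted _ X](cat_take_drop g) (sorted_pairwise tr) pairwise_cat => /andP[].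
Qed.

Lemma head_block_fair cap : fair_block cap B -> fair_block g (head_block M g B).
Proof.
case/and4P=> _ _ bn Ball; rewrite /fair_block /= size_map size_take size_s g_lt.
rewrite g_gt0 leqnn (leq_trans _ bn) /=; last by rewrite leq_add2l ltnW.
apply/allP => _ /mapP[p pT ->]; have [pB pM] := mem_sort_by_mark (mem_take pT).
have /andP[-> _] := allP Ball _ pB; rewrite -pM.
exact: le_bigmax_seq.
Qed.

Lemma tail_block_fair c : fair_block (g + c) B -> fair_block c (tail_block M g B).
Proof.
case/and4P=> _ cap bn Ball; rewrite /fair_block /= size_map size_drop size_s.
rewrite subn_gt0 g_lt leq_subLR cap -addnA subnKC ?bn //=; last exact: ltnW.
apply/allP => _ /mapP[q qD ->]; have [qB qM] := mem_sort_by_mark (mem_drop qD).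
have /andP[lo_q ->] := allP Ball _ qB; rewrite andbT -qM /split_point big_seq.
apply: bigmax_le => [|p pT]; last exact: (allrelP s_split).
rewrite qM (le_trans lo_q) // M_mono ?leq_addr //.
by apply: leq_trans bn; rewrite leq_add2l ltnW.
Qed.

End Step.

Lemma carve_fair g f B : (0 < g)%N -> fair_block (g * f.+1) B ->
  all (fair_block g) (carve M g f B).
Proof.
move=> g0; elim: f B => [|f IH] B /=; first by rewrite muln1 andbT.
case: ifP => small fB /=.
  by case/and4P: fB => ? _ ? ?; rewrite andbT; apply/and4P.
have big : (g < size (members B))%N by rewrite ltnNge small.
rewrite (head_block_fair g0 big fB) IH //.
by apply: tail_block_fair => //; rewrite -mulnS.
Qed.

Lemma carve_all_fair g f st : (0 < g)%N -> all (fair_block (g * f.+1)) st ->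
  all (fair_block g) (carve_all M g f st).
Proof.
move=> g0; elim: st => //= B st IH /andP[fB fst].
by rewrite all_cat carve_fair // IH.
Qed.

End Fairness.

Section Stages.
Variables (m k : nat).

Definition group_size r := (m ^ (k - r.+1))%N.

Fixpoint stage M r : seq block :=
  if r is r'.+1 then carve_all M (group_size r') m.-1 (stage M r')
  else [:: Block (enum 'I_n) 0 0 1].

Lemma stage_tiles M r : tiles (stage M r) 0 1.
Proof. by elim: r => [|r IH] /=; [rewrite !eqxx | exact: carve_all_tiles]. Qed.

Lemma stage_members M r : perm_eq (flatten (map members (stage M r))) (enum 'I_n).
Proof.
elim: r => [|r IH] /=; first by rewrite cats0.
exact: perm_trans (carve_all_members _ _ _ _) IH.
Qed.

Lemma stage_endpoints (Q : pred R) M r : (forall i j, Q (M i j)) -> Q 0 -> Q 1 ->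
  all (fun B => Q (lo B) && Q (hi B)) (stage M r).
Proof.
move=> QM Q0 Q1; elim: r => [|r IH] /=; first by rewrite Q0 Q1.
exact: carve_all_endpoints.
Qed.

Lemma stage_fair M : (forall i j j', (j <= j')%N -> (j' <= n)%N -> M i j <= M i j') ->
  (forall i, 0 <= M i 0) -> (forall i, M i n <= 1) ->
  (0 < n)%N -> (n <= m ^ k)%N -> (0 < m)%N ->
  forall r, (r <= k)%N -> all (fair_block M (m ^ (k - r))) (stage M r).
Proof.
move=> M_mono M0 Mn n0 nm m0; elim=> [|r IH] rk /=.
  rewrite subn0 andbT /fair_block /= size_enum_ord n0 nm leqnn /=.
  by apply/allP => i _; rewrite M0 Mn.
have E : (group_size r * m.-1.+1 = m ^ (k - r))%N.
  by rewrite prednK // /group_size -expnSr subnSK.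
apply: (carve_all_fair M_mono); first by rewrite /group_size expn_gt0 m0.
by rewrite E; apply: IH; exact: ltnW.
Qed.

End Stages.

Definition block_index (st : seq block) (i : 'I_n) : nat :=
  find (fun B => i \in members B) st.

Definition block_of (st : seq block) (i : 'I_n) : block :=
  nth null_block st (block_index st i).

Lemma block_ofP st i : i \in flatten (map members st) ->
  (block_index st i < size st)%N /\ i \in members (block_of st i).
Proof.
move=> /flattenP[_ /mapP[B Bst ->] iB].
have hasi : has (fun B => i \in members B) st by apply/hasP; exists B.
by split; [rewrite -has_find | exact: (nth_find null_block hasi)].
Qed.

Lemma tiles_bounds st x y : tiles st x y -> all (fun B => lo B <= hi B) st ->
  x <= y /\ {in st, forall B, x <= lo B /\ hi B <= y}.
Proof.
elim: st x => [|B st IH] x /=; first by move/eqP ->.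
move=> /andP[/eqP <- t] /andP[Blh lh]; have [hy inst] := IH _ t lh.
split=> [|C]; first exact: le_trans hy.
rewrite inE => /predU1P[-> //|Cst]; have [h1 h2] := inst C Cst.
by split=> //; exact: le_trans Blh h1.
Qed.

Lemma tiles_sorted st x y : tiles st x y -> all (fun B => lo B <= hi B) st ->
  forall l l', (l < l')%N -> (l' < size st)%N ->
  hi (nth null_block st l) <= lo (nth null_block st l').
Proof.
elim: st x => [|B st IH] x //= /andP[_ t] /andP[_ lh] [|l] [|l'] //= ll' l's.
  by have [_ /(_ _ (mem_nth null_block l's))[]] := tiles_bounds t lh.
exact: IH t lh l l' ll' l's.
Qed.

Lemma tiles_sum st x y : tiles st x y ->
  all (fun B => size (members B) == 1%N) st -> uniq (flatten (map members st)) ->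
  \sum_(i <- flatten (map members st)) (hi (block_of st i) - lo (block_of st i)) = y - x.
Proof.
elim: st x => [|B st IH] x /=; first by move/eqP ->; rewrite big_nil subrr.
move=> /andP[/eqP Bx t] /andP[B1 one].
case: B Bx t B1 => [[|i [|]]] b lo' hi' //= -> t _.
rewrite big_cons => /andP[ist u].
rewrite /block_of /block_index /= mem_seq1 eqxx /=.
rewrite (eq_big_seq (fun j => hi (block_of st j) - lo (block_of st j))); last first.
  move=> j jst; rewrite /block_of /block_index /= mem_seq1.
  by have -> : (j == i) = false by apply: contraNF ist => /eqP <-.
by rewrite (IH _ t one u) addrC addrA subrK.
Qed.

Lemma tiles_interval_partition st :
  tiles st 0 1 -> all (fun B => lo B <= hi B) st ->
  all (fun B => size (members B) == 1%N) st ->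
  perm_eq (flatten (map members st)) (enum 'I_n) ->
  interval_partition (fun i => lo (block_of st i)) (fun i => hi (block_of st i)).
Proof.
move=> t lh one pst.
have inst i : (block_index st i < size st)%N /\ i \in members (block_of st i).
  by apply: block_ofP; rewrite (perm_mem pst) mem_enum.
have single i : members (block_of st i) = [:: i].
  have [lt iB] := inst i; move: (all_nthP null_block one _ lt) iB.
  by rewrite /block_of; case: (members _) => [|j [|]] //= _; rewrite inE => /eqP ->.
split=> [i|].
  have [lt _] := inst i; have Bst := mem_nth null_block lt.
  have [_ /(_ _ Bst)[-> ->]] := tiles_bounds t lh.
  by rewrite (allP lh _ Bst).
split=> [i j ij|].
  case: (ltngtP (block_index st i) (block_index st j)) => ij'.
  - by left; apply: tiles_sorted t lh _ _ ij' (inst j).1.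
  - by right; apply: tiles_sorted t lh _ _ ij' (inst i).1.
  - have := single i; rewrite /block_of ij' -/(block_of st j) single => -[ji].
    by rewrite ji eqxx in ij.
rewrite -big_enum /= -(perm_big _ pst) (tiles_sum t one) ?subr0 //.
by rewrite (perm_uniq pst) enum_uniq.
Qed.

Lemma fair_singleton M B i : fair_block M 1 B -> i \in members B ->
  [/\ (offset B < n)%N, lo B <= M i (offset B) & M i (offset B).+1 <= hi B].
Proof.
case: B => [[|j [|]]] //= b lo' hi'; rewrite inE => /and4P[_ _ bn] /= /andP[/andP[h1 h2] _].
by move/eqP ->; rewrite -addn1 bn -addn1.
Qed.

End Blocks.

Section Protocol.
Variables (R : realType) (n m k : nat).

Definition cut_query (q : 'I_n * nat) : query R n := QCut q.1 (q.2%:R / n%:R).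

Definition answers_cut (q : 'I_n * nat) (qa : query R n * R) : bool :=
  if qa.1 is QCut i a then (i == q.1) && (a == q.2%:R / n%:R) else false.

(* Unasked points read as 0; [informed_stage] shows the protocol never reads one. *)
Fixpoint recorded_cut (h : transcript R n) (i : 'I_n) (j : nat) : R :=
  if h is qa :: h' then
    if answers_cut (i, j) qa then qa.2 else recorded_cut h' i j
  else 0.

Definition correct_answer (v : 'I_n -> R -> R) (qa : query R n * R) : bool :=
  if qa.1 is QCut i a then qa.2 == cut_answer (v i) a else true.

Definition round_queries r (h : transcript R n) : seq (query R n) :=
  map cut_query (carve_queries (group_size m k r) m.-1 (stage m k (recorded_cut h) r)).

Definition output_indices (h : transcript R n) (i : 'I_n) : nat * nat :=
  let B := block_of (stage m k (recorded_cut h) k) i in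
  (index (lo B) (points h), index (hi B) (points h)).

Definition carving_protocol : protocol R n :=
  Protocol [seq round_queries r | r <- iota 0 k] output_indices.

Lemma recorded_cut_points h i j : recorded_cut h i j \in points h.
Proof.
elim: h => [|[q a] h IH] /=; first by rewrite inE eqxx.
have sub : {subset points h <= points ((q, a) :: h)}.
  move=> x; rewrite /points /cut_points /= !inE.
  by case: q => [i' a'|i' l] /=; rewrite ?inE; case/or3P => ->; rewrite ?orbT.
case: ifP => [|_]; last exact: sub.
by clear sub; case: q => //= i' a' _; rewrite /points /cut_points /= !inE eqxx !orbT.
Qed.

Lemma recorded_cutE v h i j : all (correct_answer v) h -> has (answers_cut (i, j)) h ->
  recorded_cut h i j = cut_answer (v i) (j%:R / n%:R).
Proof.
elim: h => [|[[i' a|i' l] ans] h IH] //= /andP[c ch].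
by case: ifP => [/andP[/eqP /= <- /eqP /= <-] _ | _ /(IH ch)]; [exact/eqP |].
Qed.

Section Run.
Variable v : 'I_n -> R -> R.
Hypothesis v_density : forall i, is_density (v i).

Definition share_cut (i : 'I_n) (j : nat) : R := cut_answer (v i) (j%:R / n%:R).

Lemma share_cutP i j : (j <= n)%N ->
  [/\ 0 <= share_cut i j, share_cut i j <= 1 & Vcum (v i) (share_cut i j) = j%:R / n%:R].
Proof.
move=> jn; apply: cut_answerP => //; case: n jn => [|n'] jn.
  by rewrite invr0 mulr0 lexx ler01.
by rewrite divr_ge0 //= ler_pdivrMr ?ltr0n // mul1r ler_nat.
Qed.

Lemma share_cut_mono i j j' : (j <= j')%N -> (j' <= n)%N -> share_cut i j <= share_cut i j'.
Proof.
rewrite leq_eqVlt => /predU1P[-> // | jj'] j'n.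
have jn : (j < n)%N := leq_trans jj' j'n.
have [a0 a1 va] := share_cutP i (ltnW jn); have [b0 b1 vb] := share_cutP i j'n.
rewrite leNgt; apply/negP => lt; have := Vcum_le (v_density i) b0 (ltW lt) a1.
rewrite va vb ler_pM2r ?invr_gt0 ?ltr0n ?(leq_ltn_trans (leq0n j) jn) // ler_nat.
by rewrite leqNgt jj'.
Qed.

Definition informed r (h : transcript R n) : Prop :=
  all (correct_answer v) h /\
  forall r', (r' < r)%N ->
    {in carve_queries (group_size m k r') m.-1 (stage m k share_cut r'),
      forall q, has (answers_cut q) h}.

Lemma informed_stage r h : informed r h -> forall r', (r' <= r)%N ->
  stage m k (recorded_cut h) r' = stage m k share_cut r'.
Proof.
move=> [hc hh]; elim=> [//|r' IH] r'r /=.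
rewrite IH; last exact: ltnW.
apply: carve_all_ext => -[i j] ij.
exact: recorded_cutE hc (hh _ r'r _ ij).
Qed.

Lemma run_rounds_informed d r h : informed r h ->
  let h' := run_rounds v [seq round_queries x | x <- iota r d] h in
  informed (r + d) h' /\ size h' = (size h + d * (n * m.-1))%N.
Proof.
elim: d r h => [|d IH] r h hr /=; first by rewrite addn0 mul0n addn0.
have qE : round_queries r h =
    map cut_query (carve_queries (group_size m k r) m.-1 (stage m k share_cut r)).
  by rewrite /round_queries (informed_stage hr (leqnn r)).
set h1 := h ++ _.
have hr1 : informed r.+1 h1.
  case: hr => hc hh; split.
    rewrite all_cat hc qE -map_comp all_map.
    by apply/allP => q _ /=; rewrite /correct_answer /= eqxx.
  move=> r'; rewrite ltnS leq_eqVlt => /orP[/eqP -> q qr|lt q qr']; rewrite has_cat.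
    by rewrite qE -map_comp has_map orbC; apply/orP; left; apply/hasP; exists q;
      rewrite //= /answers_cut /= !eqxx.
  by rewrite (hh _ lt q qr').
have [hd sd] := IH r.+1 h1 hr1; rewrite -addSnnS; split => //.
by rewrite sd /h1 size_cat size_map qE size_map size_carve_queries
  (perm_size (stage_members _ _ _ _)) size_enum_ord mulSn addnA.
Qed.

Lemma carving_protocol_run :
  informed k (run carving_protocol v) /\
  num_queries carving_protocol v = (k * (n * m.-1))%N.
Proof.
have [] := @run_rounds_informed k 0 [::]; first by split=> // r'.
by rewrite add0n.
Qed.

Lemma fair_singleton_share B i : fair_block share_cut 1 B -> i \in members B ->
  0 <= lo B -> hi B <= 1 -> n%:R^-1 <= Vint (v i) (lo B) (hi B).
Proof.
move=> fB iB lo0 hi1; have [bn lo_i i_hi] := fair_singleton fB iB.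
have [a0 a1 va] := share_cutP i (ltnW bn); have [b0 b1 vb] := share_cutP i bn.
rewrite (Vint_cumE (v_density i) lo0 (fair_block_le share_cut_mono fB) hi1).
apply: le_trans (lerB (Vcum_le (v_density i) b0 i_hi hi1)
                      (Vcum_le (v_density i) lo0 lo_i a1)).
by rewrite va vb -mulrBl -natrB // subSnn mul1r.
Qed.

Hypotheses (n_gt0 : (0 < n)%N) (n_le : (n <= m ^ k)%N) (m_gt0 : (0 < m)%N).

Lemma carving_protocol_proportional : proportional_interval_output carving_protocol v.
Proof.
have [hk _] := carving_protocol_run; set H := run _ _ in hk.
have SE := informed_stage hk (leqnn k); set st := stage m k share_cut k in SE.
have fst : all (fair_block share_cut 1) st.
  have := stage_fair share_cut_mono _ _ n_gt0 n_le m_gt0 (leqnn k).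
  rewrite subnn expn0; apply=> i; [by case: (share_cutP i (leq0n n))|].
  by case: (share_cutP i (leqnn n)).
have lh : all (fun B => lo B <= hi B) st.
  by apply: sub_all fst => B; apply: fair_block_le; exact: share_cut_mono.
have pts : all (fun B => (lo B \in points H) && (hi B \in points H)) st.
  rewrite -SE; apply: (@stage_endpoints R n m k (fun x => x \in points H)).
  - exact: recorded_cut_points.
  - by rewrite /points inE eqxx.
  - by rewrite /points !inE eqxx orbT.
have inB i : (block_index st i < size st)%N /\ i \in members (block_of st i).
  by apply: block_ofP; rewrite (perm_mem (stage_members _ _ _ _)) mem_enum.
have inst i : block_of st i \in st by apply: mem_nth; exact: (inB i).1.
have pt i : (lo (block_of st i) \in points H) && (hi (block_of st i) \in points H).
  exact: allP pts _ (inst i).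
have LE i : left_end carving_protocol v i = lo (block_of st i).
  by rewrite /left_end /= /output_indices -/H SE nth_index //; case/andP: (pt i).
have RE i : right_end carving_protocol v i = hi (block_of st i).
  by rewrite /right_end /= /output_indices -/H SE nth_index //; case/andP: (pt i).
split; first by move=> i; rewrite !index_mem SE; apply/andP; exact: pt.
split.
  rewrite (funext LE) (funext RE).
  apply: tiles_interval_partition (stage_tiles _ _ _ _) lh _ (stage_members _ _ _ _).
  by apply: sub_all fst => B /and4P[B0 B1 _ _]; rewrite eqn_leq B1.
move=> i; rewrite LE RE.
have [_ /(_ _ (inst i))[lo0 hi1]] := tiles_bounds (stage_tiles _ _ _ _) lh.
exact: fair_singleton_share (allP fst _ (inst i)) (inB i).2 lo0 hi1.
Qed.

End Run.

End Protocol.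

Lemma root_ceiling_exists n k : (0 < n)%N -> (0 < k)%N ->
  exists m, [/\ (0 < m)%N, (n <= m ^ k)%N & (m.-1 ^ k < n)%N].
Proof.
move=> n0 k0; have exm : exists m, (n <= m ^ k)%N.
  by exists n; rewrite -{1}(expn1 n) leq_pexp2l.
have [m nm m_min] := ex_minnP exm.
have m0 : (0 < m)%N.
  by case: m nm {m_min} => //; rewrite exp0n // leqn0 => /eqP n00; rewrite n00 in n0.
exists m; split=> //; rewrite ltnNge; apply/negP => /m_min.
by rewrite -ltnS prednK // ltnn.
Qed.

Lemma le_root (R : realType) (a b : R) k : (0 < k)%N -> 0 <= a -> 0 <= b ->
  a ^+ k <= b -> a <= b `^ k%:R^-1.
Proof.
move=> k0 a0 b0 ab; have kR : k%:R != 0 :> R by rewrite pnatr_eq0 -lt0n.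
have -> : a = (a ^+ k) `^ k%:R^-1 by rewrite -powR_mulrn // -powRrM mulfV // powRr1.
by apply: ge0_ler_powR; rewrite ?invr_ge0 ?nnegrE ?ler0n ?exprn_ge0.
Qed.

Lemma queries_bound (R : realType) n m k : (0 < n)%N -> (0 < k)%N -> (m.-1 ^ k < n)%N ->
  ((k * (n * m.-1))%:R : R) <= k%:R * n%:R `^ (1 + k%:R^-1).
Proof.
move=> n0 k0 mn; rewrite powRD ?pnatr_eq0 -?lt0n ?n0 ?implybT // powRr1 ?ler0n //.
rewrite !natrM !mulrA; apply: ler_wpM2l; first by rewrite mulr_ge0 ?ler0n.
by apply: le_root; rewrite ?ler0n // -natrX ler_nat ltnW.
Qed.

Local Close Scope classical_set_scope.

Theorem proposition14 :
  exists C : nat, forall (R : realType) (n k : nat), (1 <= n)%N -> (1 <= k)%N ->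
    exists P : protocol R n,
      size (rounds P) = k /\
      forall v : 'I_n -> R -> R, (forall i, is_density (v i)) ->
        proportional_interval_output P v /\
        (num_queries P v)%:R <= C%:R * k%:R * (n%:R `^ (1 + k%:R^-1) : R).
Proof.
exists 1%N => R n k n0 k0.
have [m [m0 nm mn]] := root_ceiling_exists n0 k0.
exists (carving_protocol R n m k); split; first by rewrite size_map size_iota.
move=> v v_density; split; first exact: carving_protocol_proportional.
have [_ ->] := carving_protocol_run m k v.
by rewrite mul1r queries_bound.
Qed.
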